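(* Let $n\ge 1$ and consider system (S) below associated with a 3-SAT instance on $n$ variables. If $(x,\gamma,\Delta,y,d,s)$ is feasible for (S), then $$|x_j| \ \ge\ 1-\frac{12}{n^5}-\frac{2^{-2^n}}{n^5}\qquad\text{for all } 1\le j\le 2n.$$
   Context: Let $h(y) := 2y_1^3 + y_2^3 - 6y_1y_2 + 4$ and $R_\gamma := [1.259-\gamma,1.26]\times[1.587,1.59]$. Let $D\subseteq\mathbb{R}\times\mathbb{R}^n$ be the set of $(s,d)$ with $0\le d_1\le\frac12$, $0\le d_k\le d_{k-1}^2$ ($k=2,\dots,n$), $0\le s\le d_n^2$. A 3-SAT instance consists of Boolean variables $w_1,\dots,w_n$ and clauses $C_1,\dots,C_m$, each a disjunction of three literals (a literal is some $w_j$ or its negation $\bar w_j$). To the literal $w_j$ associate the real variable $x_j$ and to $\bar w_j$ the real variable $x_{n+j}$. For clause $C_i$ denote by $x_{i_1},x_{i_2},x_{i_3}$ the variables associated with its three literals. System (S) has variables $x\in\mathbb{R}^{2n}$, $\gamma,\Delta,s\in\mathbb{R}$, $y\in\mathbb{R}^2$, $d\in\mathbb{R}^n$, and constraints: $-1\le x_j\le 1$ for $j\in[2n]$; $x_j+x_{n+j}=0$ for $j\in[n]$; $x_{i_1}+x_{i_2}+x_{i_3}\ge -1-\Delta$ for each clause $C_i$; $\gamma\ge 0$, $0\le\Delta\le 2$, $\Delta+\gamma/2\le 2$; $y\in R_\gamma$; $(s,d)\in D$; and $-n^5\sum_{j=1}^n x_j^2 + h(y) - s\le -n^6$. *)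

(* concrete reals R. Indices are 0-based:
   x j for j < 2n stands for x_{j+1}; d k for k < n stands for d_{k+1}. *)
From Stdlib Require Import Reals Lra Lia List.
Open Scope R_scope.

(* A literal: Boolean variable w_{lvar+1} (lvar < n), negated if lneg = true. *)
Record literal := mkLit { lvar : nat; lneg : bool }.
Definition clause := (literal * literal * literal)%type.

Definition lit_ok (n : nat) (l : literal) : Prop := (lvar l < n)%nat.
Definition clause_ok (n : nat) (c : clause) : Prop :=
  let '(a, b, e) := c in lit_ok n a /\ lit_ok n b /\ lit_ok n e.

(* index of the real variable associated to a literal:
   w_j -> x_j, bar w_j -> x_{n+j} (0-based) *)
Definition lit_index (n : nat) (l : literal) : nat :=
  if lneg l then (n + lvar l)%nat else lvar l.

Definition h (y1 y2 : R) : R := 2 * y1 ^ 3 + y2 ^ 3 - 6 * y1 * y2 + 4.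

Definition in_Rgamma (gamma y1 y2 : R) : Prop :=
  1259 / 1000 - gamma <= y1 <= 126 / 100 /\ 1587 / 1000 <= y2 <= 159 / 100.

Definition in_D (n : nat) (s : R) (d : nat -> R) : Prop :=
  0 <= d 0%nat <= 1 / 2 /\
  (forall k : nat, (1 <= k < n)%nat -> 0 <= d k <= (d (k - 1)%nat) ^ 2) /\
  0 <= s <= (d (n - 1)%nat) ^ 2.

Definition sumsq (n : nat) (x : nat -> R) : R :=
  fold_right Rplus 0 (map (fun j => x j ^ 2) (seq 0 n)).

Definition feasible_S (n : nat) (cls : list clause) (x : nat -> R)
  (gamma Delta s y1 y2 : R) (d : nat -> R) : Prop :=
  (forall j : nat, (j < 2 * n)%nat -> -1 <= x j <= 1) /\
  (forall j : nat, (j < n)%nat -> x j + x (n + j)%nat = 0) /\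
  (forall c : clause, In c cls ->
     let '(a, b, e) := c in
     x (lit_index n a) + x (lit_index n b) + x (lit_index n e) >= -1 - Delta) /\
  0 <= gamma /\ 0 <= Delta <= 2 /\ Delta + gamma / 2 <= 2 /\
  in_Rgamma gamma y1 y2 /\
  in_D n s d /\
  - (INR n) ^ 5 * sumsq n x + h y1 y2 - s <= - (INR n) ^ 6.

(* Write N = n and e = 2^-(2^n).  The last constraint of (S) reads
     N^5 * sum_{j<n} x_j^2 >= N^6 + h(y) - s.
   Three independent estimates bound the right-hand side from below:
   - on the box R_gamma (with gamma <= 4, forced by Delta >= 0 and
     Delta + gamma/2 <= 2) the cubic h is at least -12;
   - membership in D makes d doubly-exponentially small,
     d_k <= (1/2)^(2^k), hence s <= d_n^2 <= e;
   - since every x_i^2 <= 1, the sum of squares is at most (N - 1) + x_k^2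
     for each k < n.
   Together they give x_k^2 >= 1 - (12 + e)/N^5 for k < n, and |x_k| >= x_k^2
   because |x_k| <= 1.  The negated literals x_{n+k} = -x_k inherit the
   bound, which covers all 2n indices. *)
From Stdlib Require Import Reals List Lra Lia.
Open Scope R_scope.

Lemma h_ge_on_Rgamma (gamma y1 y2 : R) :
  gamma <= 4 -> in_Rgamma gamma y1 y2 -> h y1 y2 >= -12.
Proof.
unfold in_Rgamma, h; intros Hg [[Hy1l Hy1u] [Hy2l Hy2u]]; simpl.
assert (Hcube2 : y2 * y2 * y2 >= 3) by nra.
destruct (Rle_dec 0 y1) as [Hpos | Hneg].
- assert (0 <= y1 * y1 * y1) by (repeat apply Rmult_le_pos; lra).
  assert (y1 * y2 <= 126 / 100 * (159 / 100)) by nra.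
  nra.
- assert (-6 * y1 * y2 >= -6 * y1 * (1587 / 1000)) by nra.
  assert (2 * y1 * y1 * y1 - 6 * y1 * (1587 / 1000) + 19 >= 0) by nra.
  nra.
Qed.

Lemma half_pow2_sq (k : nat) : ((/ 2) ^ (2 ^ k)) ^ 2 = (/ 2) ^ (2 ^ S k).
Proof. rewrite Nat.pow_succ_r', Nat.mul_comm, pow_mult; reflexivity. Qed.

Lemma in_D_d_bound (n : nat) (s : R) (d : nat -> R) :
  in_D n s d -> forall k : nat, (k < n)%nat -> 0 <= d k <= (/ 2) ^ (2 ^ k).
Proof.
intros [Hd0 [Hstep _]]; induction k as [| k IH]; intros Hk.
- simpl; lra.
- destruct (IH ltac:(lia)) as [Hlo Hhi].
  destruct (Hstep (S k) ltac:(lia)) as [Hlo' Hhi'].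
  replace (S k - 1)%nat with k in Hhi' by lia.
  rewrite <- half_pow2_sq.
  split; [exact Hlo' |].
  apply Rle_trans with (1 := Hhi'); apply pow_incr; lra.
Qed.

Lemma in_D_s_bound (n : nat) (s : R) (d : nat -> R) :
  (1 <= n)%nat -> in_D n s d -> s <= / 2 ^ (2 ^ n).
Proof.
intros Hn HD.
destruct (in_D_d_bound n s d HD (n - 1) ltac:(lia)) as [Hlo Hhi].
destruct HD as [_ [_ [_ Hs]]].
replace n with (S (n - 1)) by lia.
rewrite <- pow_inv, <- half_pow2_sq.
apply Rle_trans with (1 := Hs); apply pow_incr; lra.
Qed.

Lemma fold_right_Rplus_init (l : list R) (c : R) :
  fold_right Rplus c l = fold_right Rplus 0 l + c.
Proof. induction l as [| a l IH]; simpl; [lra | rewrite IH; lra]. Qed.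

Lemma sumsq_S (m : nat) (x : nat -> R) : sumsq (S m) x = sumsq m x + x m ^ 2.
Proof.
unfold sumsq; rewrite seq_S, map_app, fold_right_app; cbn [map fold_right].
rewrite Rplus_0_r; apply fold_right_Rplus_init.
Qed.

Lemma sumsq_le_one_term (m : nat) (x : nat -> R) :
  (forall i : nat, (i < m)%nat -> -1 <= x i <= 1) ->
  sumsq m x <= INR m /\
  (forall k : nat, (k < m)%nat -> sumsq m x <= INR m - 1 + x k ^ 2).
Proof.
induction m as [| m IH]; intros Hx.
- split; [unfold sumsq; simpl; lra | intros; lia].
- destruct IH as [Hsum Hone]; [intros; apply Hx; lia |].
  rewrite sumsq_S, S_INR.
  assert (Hsq : x m ^ 2 <= 1) by (specialize (Hx m ltac:(lia)); simpl; nra).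
  split; [lra |].
  intros k Hk; destruct (Nat.eq_dec k m) as [-> | Hkm]; [lra |].
  specialize (Hone k ltac:(lia)); lra.
Qed.

(* On [-1, 1] we have |t| >= t^2, so a lower bound on t^2 bounds |t|. *)
Lemma Rabs_ge_of_sq_ge (t r : R) : -1 <= t <= 1 -> t ^ 2 >= r -> Rabs t >= r.
Proof.
intros Ht Hsq.
assert (Habs : Rabs t <= 1) by (apply Rabs_le; lra).
assert (Hsq_abs : t ^ 2 = Rabs t * Rabs t)
  by (rewrite <- Rabs_mult, Rabs_pos_eq; simpl; nra).
pose proof (Rabs_pos t); nra.
Qed.

Theorem mainTheorem3 :
  forall (n : nat) (cls : list clause),
    (1 <= n)%nat ->
    Forall (clause_ok n) cls ->
    forall (x : nat -> R) (gamma Delta s y1 y2 : R) (d : nat -> R),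
      feasible_S n cls x gamma Delta s y1 y2 d ->
      forall j : nat, (j < 2 * n)%nat ->
        Rabs (x j) >= 1 - 12 / (INR n) ^ 5
                        - (/ 2 ^ (Nat.pow 2 n)) / (INR n) ^ 5.
Proof.
intros n cls Hn _ x gamma Delta s y1 y2 d
  [Hx [Hneg [_ [_ [HDelta [HDg [HR [HD Hmain]]]]]]]] j Hj.
set (e := / 2 ^ (2 ^ n)).
assert (Hh := h_ge_on_Rgamma gamma y1 y2 ltac:(lra) HR).
assert (Hs : s <= e) by exact (in_D_s_bound n s d Hn HD).
assert (HN5 : 0 < INR n ^ 5) by (apply pow_lt, lt_0_INR; lia).
assert (Hxn : forall i, (i < n)%nat -> -1 <= x i <= 1) by (intros; apply Hx; lia).
destruct (sumsq_le_one_term n x Hxn) as [_ Hone].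
assert (Hfirst : forall k, (k < n)%nat ->
          Rabs (x k) >= 1 - 12 / INR n ^ 5 - e / INR n ^ 5).
{ intros k Hk; apply (Rabs_ge_of_sq_ge _ _ (Hxn k Hk)).
  assert (Hscaled : INR n ^ 5 * sumsq n x <= INR n ^ 5 * (INR n - 1 + x k ^ 2))
    by (apply Rmult_le_compat_l; [lra | exact (Hone k Hk)]).
  assert (Hkey : INR n ^ 5 * x k ^ 2 >= INR n ^ 5 - 12 - e) by lra.
  apply Rle_ge, (Rmult_le_reg_l (INR n ^ 5)); [exact HN5 |].
  replace (INR n ^ 5 * (1 - 12 / INR n ^ 5 - e / INR n ^ 5))
    with (INR n ^ 5 - 12 - e) by (field; apply not_0_INR; lia).
  lra. }
destruct (Nat.lt_ge_cases j n) as [Hjn | Hjn]; [exact (Hfirst j Hjn) |].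
specialize (Hneg (j - n)%nat ltac:(lia)).
replace (n + (j - n))%nat with j in Hneg by lia.
replace (x j) with (- x (j - n)%nat) by lra.
rewrite Rabs_Ropp; apply Hfirst; lia.
Qed.
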